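(* Let $F$ be a finite field of characteristic $3$. Let $k\ge 0$ be an integer, $m=3k+1$, and $t$ an integer with $t^3\equiv 1\pmod m$ and $\gcd(m,t-1)=1$. Let $G=T_{3m}=\langle x,y\mid x^m=y^3=1,\ y^{-1}xy=x^t\rangle$ (of order $3m$) and $FG$ its group algebra. Let $s\in FG$ be the sum of all elements of $G$ whose order is a power of $3$ (including the identity), and let $\mathrm{Anh}(s)=\{\alpha\in FG\mid \alpha s=s\alpha=0\}$. Then $\mathrm{Anh}(s)$ is a nilpotent ideal of $FG$. *)

From HB Require Import structures.
From mathcomp Require Import all_boot all_order all_algebra all_fingroup.
From mathcomp Require Import pgroup.
Set Implicit Arguments. Unset Strict Implicit. Unset Printing Implicit Defensive.
Import Order.TTheory GRing.Theory Num.Theory.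
Local Open Scope ring_scope.

(* The group algebra F[gT] of a finite group gT over a ring F, represented
   as the F-valued functions on gT (a = sum_g a(g) g), with pointwise
   addition (the ffun zmodType structure) and convolution product. *)
Section GroupAlgebra.
Variables (F : comNzRingType) (gT : finGroupType).
Notation FG := {ffun gT -> F}.

Definition ga_mul (a b : FG) : FG :=
  [ffun g => \sum_(h : gT) a h * b (h^-1 * g)%g].

Definition ga_one : FG := [ffun g => (g == 1%g)%:R].

Definition ga_prod (l : seq FG) : FG := foldr ga_mul ga_one l.

Definition ga_ideal (I : FG -> Prop) : Prop :=
  [/\ I 0,
      (forall a b, I a -> I b -> I (a - b)) &
      (forall a r, I a -> I (ga_mul r a) /\ I (ga_mul a r))].

(* nilpotent: I^n = 0 for some n >= 1, i.e. every product of n elements of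
   I vanishes (I^n is additively spanned by such products). *)
Definition ga_nilpotent (I : FG -> Prop) : Prop :=
  exists n : nat, (0 < n)%N /\
    forall l : seq FG, size l = n -> (forall a, a \in l -> I a) -> ga_prod l = 0.

Definition s3 : FG := [ffun g => ((3.-elt g)%g : bool)%:R].

Definition Anh (s : FG) : FG -> Prop :=
  fun a => ga_mul a s = 0 /\ ga_mul s a = 0.

End GroupAlgebra.

From HB Require Import structures.
From mathcomp Require Import all_boot all_order all_algebra all_fingroup.
From mathcomp Require Import pgroup cyclic ring zify.
Import GRing.Theory Num.Theory.
Set Implicit Arguments. Unset Strict Implicit.
Local Open Scope group_scope.
Local Open Scope ring_scope.

(* Put N = <[x]>, a normal subgroup of order m = 1 (mod 3) and index 3.  The
   3-elements of G are 1 and the elements outside N, so s = 1 + G^ - N^, where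
   A^ is the sum of the elements of A.  Since |N| = 1 in F, a s = 0 forces a to
   be constant on the cosets gN with coefficient sum 0; such elements form the
   augmentation ideal of a copy of F[G/N] = F[C_3].  In characteristic 3 the
   product of two of them is constant on G, and an element of coefficient sum 0
   kills constants, so Anh(s)^3 = 0.  Anh(s) is an ideal because s is central. *)

Section Order3Elements.
Local Open Scope group_scope.
Variables (gT : finGroupType) (y : gT).
Hypothesis y3 : y ^+ 3 = 1.

Lemma invg_expg3 : y^-1 = y * y.
Proof. by apply/eqP; rewrite eq_invg_mul -y3 !expgS expg0 mulg1. Qed.

Lemma expg3_mul n : (y * n) ^+ 3 = n ^ y^-1 * n ^ y * n.
Proof.
rewrite !conjgE invgK !expgS expg0 mulg1 !mulgA.
by rewrite -[y * n * y^-1 * y^-1]mulgA {2}invg_expg3 mulKg.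
Qed.

End Order3Elements.

Section GroupT3m.
Local Open Scope group_scope.
Variables (gT : finGroupType) (x y : gT) (m c : nat).
Hypotheses (xm : x ^+ m = 1) (y3 : y ^+ 3 = 1) (xy : x ^ y = x ^+ c).
Hypothesis xc : x ^+ (c * c + c + 1) = 1.
Hypothesis gen_xy : <<[set x; y]>> = [set: gT].
Hypothesis cardG : #|gT| = (3 * m)%N.
Hypothesis m_coprime3 : ~~ (3 %| m)%N.

Let X := <[x]>%G.

Let m_gt0 : (0 < m)%N.
Proof. by rewrite lt0n; apply: contraNneq m_coprime3 => ->. Qed.

Lemma norm_cycle_setT : [set: gT] \subset 'N(X).
Proof.
rewrite -gen_xy gen_subG subUset !sub1set -!cycle_subG normG /=.
by rewrite norms_cycle xy mem_cycle.
Qed.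

Lemma mul_cycles_setT : X * <[y]> = [set: gT].
Proof.
apply/eqP; rewrite eqEsubset subsetT -norm_joinEr; last first.
  exact: subset_trans (subsetT _) norm_cycle_setT.
rewrite -gen_xy gen_subG subUset !sub1set.
by rewrite !(subsetP _ _ (cycle_id _)) ?joing_subl ?joing_subr.
Qed.

Lemma card_cycle_m : #|X| = m.
Proof.
have xm_dvd : (#[x] %| m)%N by rewrite order_dvdn xm.
have y_le3 : (#[y] <= 3)%N by rewrite dvdn_leq // order_dvdn y3.
have : (3 * m <= #[x] * 3)%N.
  rewrite -cardG -cardsT -mul_cycles_setT (leq_trans _ (leq_mul (leqnn _) y_le3)) //.
  by rewrite [X in (_ <= X)%N]mul_cardG leq_pmulr // cardG_gt0.
by rewrite mulnC leq_pmul2r // => le_m; apply/eqP; rewrite eqn_leq dvdn_leq.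
Qed.

Lemma notin_cycle_y : y \notin X.
Proof.
apply/negP => y_in_X.
have : #|X| = #|gT| by rewrite -cardsT -mul_cycles_setT mulGSid // cycle_subG.
by rewrite card_cycle_m cardG => /eqP; lia.
Qed.

Lemma lcosets_cycle_cover g : [|| g \in X, g \in y *: X | g \in y^-1 *: X].
Proof.
have : g \in X * <[y]> by rewrite mul_cycles_setT inE.
case/mulsgP=> n _ n_in /cycleP[j ->] ->; rewrite -(expg_mod _ y3).
have : (j %% 3 < 3)%N by rewrite ltn_pmod.
case: (j %% 3)%N => [|[|[|//]]] _; rewrite !mem_lcoset invgK.
- by rewrite expg0 mulg1 n_in.
- by rewrite expg1 -conjgE memJ_norm ?n_in ?orbT // (subsetP norm_cycle_setT) ?inE.
- have -> : y * (n * y ^+ 2) = n ^ y^-1 by rewrite conjgE invgK (invg_expg3 y3).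
  by rewrite memJ_norm ?n_in ?orbT // (subsetP norm_cycle_setT) ?inE.
Qed.

Lemma conjg_cycle n : n \in X -> n ^ y = n ^+ c.
Proof. by case/cycleP=> i ->; rewrite conjXg xy -!expgM mulnC. Qed.

Lemma conjVg_cycle n : n \in X -> n ^ y^-1 = n ^+ (c * c).
Proof.
move=> n_in; rewrite (invg_expg3 y3) conjgM (conjg_cycle n_in) conjXg.
by rewrite (conjg_cycle n_in) -expgM.
Qed.

Lemma expg_cycle_cube_root n : n \in X -> n ^+ (c * c + c + 1) = 1.
Proof. by case/cycleP=> i ->; rewrite expgAC xc expg1n. Qed.

Lemma expg3_notin_cycle z : z \notin X -> z ^+ 3 = 1.
Proof.
have y'3 : y^-1 ^+ 3 = 1 by rewrite expgVn y3 invg1.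
have cube n : n \in X -> n ^ y^-1 * n ^ y * n = 1.
  move=> n_in; rewrite conjg_cycle ?conjVg_cycle // -expgD -expgSr -addn1.
  exact: expg_cycle_cube_root.
have cube' n : n \in X -> n ^ y^-1^-1 * n ^ y^-1 * n = 1.
  move=> n_in; rewrite invgK conjg_cycle ?conjVg_cycle // -expgD -expgSr -addn1.
  by rewrite [(c + _)%N]addnC expg_cycle_cube_root.
move=> z_out; case/or3P: (lcosets_cycle_cover z); rewrite ?(negPf z_out) // mem_lcoset.
  by move=> n_in; rewrite -(mulKVg y z) expg3_mul // cube.
by move=> n_in; rewrite -(mulKVg y^-1 z) expg3_mul // cube'.
Qed.

Lemma p_elt3_cycle z : 3.-elt z = (z == 1) || (z \notin X).
Proof.
case: (boolP (z \in X)) => [z_in | z_out]; last first.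
  rewrite orbT; apply: (pnat_dvd _ (pnat_id (isT : prime 3))).
  by rewrite order_dvdn expg3_notin_cycle.
rewrite orbF; apply/idP/eqP=> [z3 | ->]; last exact: p_elt1.
apply/eqP; rewrite -order_eq1; apply/eqP/(pnat_1 z3).
by apply: (pnat_dvd (order_dvdG z_in)); rewrite card_cycle_m p'natE.
Qed.

End GroupT3m.

Lemma dvdz_sqr_add_add1 (m : int) (t u : int) :
  (t ^+ 3 == 1 %[mod m])%Z -> coprimez m (t - 1) -> (u == t %[mod m])%Z ->
  (m %| u ^+ 2 + u + 1)%Z.
Proof.
move=> t3 cop; rewrite eqz_mod_dvd => ut.
have -> : u ^+ 2 + u + 1 = t ^+ 2 + t + 1 + (u - t) * (u + t + 1) by ring.
rewrite rpredD ?dvdz_mulr // -(Gauss_dvdzr _ cop).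
by rewrite eqz_mod_dvd in t3; rewrite (_ : _ * _ = t ^+ 3 - 1) //; ring.
Qed.

Section GroupAlgebra.
Variables (F : comNzRingType) (gT : finGroupType).
Implicit Types a b c s : {ffun gT -> F}.

Lemma ga_mulA a b c : ga_mul a (ga_mul b c) = ga_mul (ga_mul a b) c.
Proof.
apply/ffunP => g; rewrite !ffunE.
under eq_bigr do rewrite ffunE mulr_sumr.
under [RHS]eq_bigr do rewrite ffunE mulr_suml.
rewrite [RHS]exchange_big /=; apply: eq_bigr => h _.
rewrite [RHS](reindex_inj (mulgI h)) /=; apply: eq_bigr => l _.
by rewrite mulrA mulKg invMg !mulgA.
Qed.

Lemma ga_mulBl a b c : ga_mul (a - b) c = ga_mul a c - ga_mul b c.
Proof.
apply/ffunP => g; rewrite !ffunE -sumrB.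
by apply: eq_bigr => h _; rewrite !ffunE mulrBl.
Qed.

Lemma ga_mulBr a b c : ga_mul a (b - c) = ga_mul a b - ga_mul a c.
Proof.
apply/ffunP => g; rewrite !ffunE -sumrB.
by apply: eq_bigr => h _; rewrite !ffunE mulrBr.
Qed.

Lemma ga_mul0r a : ga_mul 0 a = 0.
Proof. by apply/ffunP => g; rewrite !ffunE big1 // => h _; rewrite ffunE mul0r. Qed.

Lemma ga_mulr0 a : ga_mul a 0 = 0.
Proof. by apply/ffunP => g; rewrite !ffunE big1 // => h _; rewrite ffunE mulr0. Qed.

Lemma ga_mulr1 a : ga_mul a (ga_one F gT) = a.
Proof.
apply/ffunP => g; rewrite ffunE (bigD1 g) //= big1 => [|h /negPf h_g].
  by rewrite ffunE mulVg eqxx mulr1 addr0.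
by rewrite ffunE -eq_mulVg1 h_g mulr0.
Qed.

Lemma ga_mulr_cst a b (lam : F) : (forall g, b g = lam) ->
  forall g, ga_mul a b g = (\sum_h a h) * lam.
Proof.
by move=> b_cst g; rewrite ffunE mulr_suml; apply: eq_bigr => h _; rewrite b_cst.
Qed.

Lemma ga_mul_classfunC s : (forall z g, s (z ^ g)%g = s z) ->
  forall a, ga_mul s a = ga_mul a s.
Proof.
move=> s_class a; apply/ffunP => g; rewrite !ffunE.
rewrite (reindex_inj (inj_comp (mulgI g) (@invg_inj _))) /=.
apply: eq_bigr => h _; rewrite mulrC invMg invgK mulgKV; congr (_ * _).
by rewrite -[RHS](s_class _ h^-1)%g conjgE invgK -mulgA mulKVg.
Qed.

Lemma Anh_classfun_ideal s : (forall z g, s (z ^ g)%g = s z) -> ga_ideal (Anh s).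
Proof.
move=> s_class; have sC := ga_mul_classfunC s_class.
split; first by split; [apply: ga_mul0r | apply: ga_mulr0].
  by move=> a b [as0 sa0] [bs0 sb0]; rewrite /Anh ga_mulBl ga_mulBr as0 bs0 sa0 sb0 subr0.
move=> a r [as0 sa0]; split; split.
- by rewrite -ga_mulA as0 ga_mulr0.
- by rewrite ga_mulA sC -ga_mulA sa0 ga_mulr0.
- by rewrite -ga_mulA -sC ga_mulA as0 ga_mul0r.
- by rewrite ga_mulA sa0 ga_mul0r.
Qed.

Lemma s3_classfun z g : s3 F gT (z ^ g)%g = s3 F gT z.
Proof. by rewrite !ffunE p_eltJ. Qed.

End GroupAlgebra.

Section LcosetConstant.
Variables (F : comNzRingType) (gT : finGroupType) (N : {group gT}).
Implicit Types f : gT -> F.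

Definition lcoset_const f := forall g n, n \in N -> f (g * n)%g = f g.

Lemma lcoset_constP f g h : lcoset_const f -> h \in (g *: N)%g -> f h = f g.
Proof. by move=> f_const; rewrite mem_lcoset => /(f_const g) <-; rewrite mulKVg. Qed.

Lemma sum_lcoset_const f g : lcoset_const f ->
  \sum_h f h * (h \in (g *: N)%g)%:R = #|N|%:R * f g.
Proof.
move=> f_const; rewrite (eq_bigr (fun h => if h \in (g *: N)%g then f h else 0)).
  rewrite -big_mkcond (eq_bigr (fun=> f g)) => [|h]; last exact: lcoset_constP.
  by rewrite sumr_const card_lcoset mulr_natl.
by move=> h _; case: (_ \in _); rewrite ?mulr1 ?mulr0.
Qed.

Lemma lcoset_const_mull f g n : ([set: gT] \subset 'N(N))%g -> lcoset_const f ->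
  n \in N -> f (n * g)%g = f g.
Proof.
move=> nNG f_const n_in; have -> : (n * g = g * n ^ g)%g by rewrite conjgE mulKVg.
by rewrite f_const // memJ_norm // (subsetP nNG) ?inE.
Qed.

End LcosetConstant.

Section IndexThree.
Variables (F : comNzRingType) (gT : finGroupType) (N : {group gT}) (y : gT).
Hypotheses (F3 : 3%:R = 0 :> F) (N1 : #|N|%:R = 1 :> F).
Hypothesis nNG : ([set: gT] \subset 'N(N))%g.
Hypotheses (y3 : (y ^+ 3 = 1)%g) (yN : y \notin N).
Hypothesis cover : forall g, [|| g \in N, g \in (y *: N)%g | g \in (y^-1 *: N)%g].
Hypothesis p_elt3 : forall z, (3.-elt z)%g = (z == 1%g) || (z \notin N).

Implicit Types a b : {ffun gT -> F}.

Let yy : (y * y = y^-1)%g. Proof. by rewrite (invg_expg3 y3). Qed.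
Let yVyV : (y^-1 * y^-1 = y)%g. Proof. by rewrite -invMg yy invgK. Qed.
Let yVN : (y^-1)%g \notin N. Proof. by rewrite groupV. Qed.

Lemma lcosets_indicator_sum h :
  ((h \in N) + (h \in (y *: N)%g) + (h \in (y^-1 *: N)%g))%N = 1%N.
Proof.
rewrite -[in h \in N](lcoset1 N).
case/or3P: (cover h); rewrite -?[in h \in N](lcoset1 N) => h_in;
  rewrite !(lcoset_transl _ h_in) !mem_lcoset ?invg1 ?invgK ?mul1g ?mulVg ?mulgV.
- by rewrite mulg1 mulg1 group1 (negPf yN) (negPf yVN).
- by rewrite yy (negPf yN) (negPf yVN) group1.
- by rewrite yVyV (negPf yN) (negPf yVN) group1.
Qed.

Lemma sum_lcoset_const3 (f : gT -> F) : lcoset_const N f ->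
  \sum_h f h = f 1%g + f y + f y^-1%g.
Proof.
move=> f_const; rewrite -[f 1%g]mul1r -[f y]mul1r -[f y^-1%g]mul1r -N1.
rewrite -!(sum_lcoset_const _ f_const) lcoset1 -!big_split /=.
by apply: eq_bigr => h _; rewrite -!mulrDr -!natrD lcosets_indicator_sum mulr1.
Qed.

Lemma s3E z : s3 F gT z = (z == 1%g)%:R + 1 - (z \in N)%:R.
Proof.
rewrite ffunE p_elt3; case: eqP => [->|_]; first by rewrite group1 addrK.
by case: (z \in N); rewrite ?add0r ?subrr ?subr0.
Qed.

Lemma Anh_s3_lcoset_const a : ga_mul a (s3 F gT) = 0 ->
  lcoset_const N a /\ \sum_h a h = 0.
Proof.
move=> as0; pose S g := \sum_h a h * (h \in (g *: N)%g)%:R.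
have aE g : a g = S g - \sum_h a h.
  have a1 : \sum_h a h * (h^-1 * g == 1)%g%:R = a g.
    rewrite -[RHS](congr1 (fun f : {ffun gT -> F} => f g) (ga_mulr1 a)) ffunE.
    by apply: eq_bigr => h _; rewrite ffunE.
  have : ga_mul a (s3 F gT) g = 0 by rewrite as0 ffunE.
  rewrite ffunE (eq_bigr (fun h => a h * (h^-1 * g == 1)%g%:R + a h
                                   - a h * (h \in (g *: N)%g)%:R)).
    rewrite sumrB big_split /= a1 => /eqP; rewrite subr_eq0 => /eqP E.
    by rewrite /S -E addrK.
  by move=> h _; rewrite s3E mulrBr mulrDr mulr1 mem_lcoset -groupV invMg invgK.
have S_const : lcoset_const N S.
  by move=> g n n_in; apply: eq_bigr => h _; rewrite lcosetM (lcoset_id n_in).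
have a_const : lcoset_const N a by move=> g n n_in; rewrite !aE S_const.
split=> //; have := aE 1%g; rewrite /S sum_lcoset_const // N1 mul1r => a1E.
by rewrite -[LHS](subKr (a 1%g)) -a1E subrr.
Qed.

Lemma ga_mul_lcoset_const a b g : lcoset_const N a -> lcoset_const N b ->
  ga_mul a b g = a 1%g * b g + a y * b (y^-1 * g)%g + a y^-1%g * b (y * g)%g.
Proof.
move=> a_const b_const; rewrite ffunE sum_lcoset_const3 ?invg1 ?mul1g ?invgK //.
by move=> h n n_in; rewrite a_const // invMg -mulgA (lcoset_const_mull _ nNG) ?groupV.
Qed.

Lemma cyclic_conv3_const (a0 a1 a2 b0 b1 b2 : F) : a0 + a1 + a2 = 0 -> b0 + b1 + b2 = 0 ->
  a0 * b1 + a1 * b0 + a2 * b2 = a0 * b0 + a1 * b2 + a2 * b1 /\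
  a0 * b2 + a1 * b1 + a2 * b0 = a0 * b0 + a1 * b2 + a2 * b1.
Proof.
move=> sa sb; have -> : a2 = - (a0 + a1) by rewrite -[LHS]subr0 -sa; ring.
have -> : b2 = - (b0 + b1) by rewrite -[LHS]subr0 -sb; ring.
split; apply/eqP; rewrite -subr_eq0; apply/eqP.
  by transitivity (3%:R * (a0 * b1 + a1 * b0 + a1 * b1)); [ring | rewrite F3 mul0r].
by transitivity (3%:R * (a1 * b1 - a0 * b0)); [ring | rewrite F3 mul0r].
Qed.

Lemma ga_mul_aug0_cst a b : lcoset_const N a -> \sum_h a h = 0 ->
  lcoset_const N b -> \sum_h b h = 0 -> forall g, ga_mul a b g = ga_mul a b 1%g.
Proof.
move=> a_const sa b_const sb g; rewrite !ga_mul_lcoset_const // !mulg1.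
rewrite !(sum_lcoset_const3 a_const, sum_lcoset_const3 b_const) in sa sb.
have [conv_y conv_yV] := cyclic_conv3_const sa sb.
have b1 n : n \in N -> b n = b 1%g by move=> n_in; rewrite -[n]mul1g b_const.
case/or3P: (cover g) => [g_in | /lcosetP[n n_in ->] | /lcosetP[n n_in ->]].
- by rewrite !b_const // (b1 g).
- by rewrite (mulKg y n) !mulgA yy !b_const // (b1 n) // conv_y.
- by rewrite mulgA yVyV mulKVg !b_const // (b1 n) // conv_yV.
Qed.

Lemma Anh_s3_nilpotent : ga_nilpotent (Anh (s3 F gT)).
Proof.
exists 3%N; split=> // -[|a [|b [|c [|? ?]]]] // _ Anh_abc.
have aug x : x \in [:: a; b; c] -> lcoset_const N x /\ \sum_h x h = 0.
  by case/Anh_abc => xs0 _; apply: Anh_s3_lcoset_const.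
have [|_ sa] := aug a; first by rewrite inE eqxx.
have [|b_const sb] := aug b; first by rewrite !inE eqxx orbT.
have [|c_const sc] := aug c; first by rewrite !inE eqxx !orbT.
apply/ffunP => g; rewrite /= ga_mulr1 [RHS]ffunE.
by rewrite (ga_mulr_cst a (ga_mul_aug0_cst b_const sb c_const sc)) sa mul0r.
Qed.

End IndexThree.

Theorem proposition3p3
  (F : finFieldType) (hchar : (3 \in [pchar F])%N)
  (k : nat) (t : int)
  (ht3 : (t ^+ 3 == 1 %[mod (3 * k + 1)%N])%Z)
  (htg : gcdz (3 * k + 1)%N (t - 1) = 1%N)
  (gT : finGroupType) (x y : gT)
  (hx : (x ^+ (3 * k + 1))%g = 1%g) (hy : (y ^+ 3)%g = 1%g)
  (hxy : (x ^ y)%g = (x ^+ `|(t %% (3 * k + 1)%N)%Z|%N)%g)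
  (hgen : <<[set x; y]>>%g = [set: gT])
  (hcard : #|gT| = (3 * (3 * k + 1))%N) :
  ga_ideal (Anh (@s3 F gT)) /\ ga_nilpotent (Anh (@s3 F gT)).
Proof.
set m := (3 * k + 1)%N in ht3 htg hx hxy hcard.
set c := `|(t %% m)%Z|%N in hxy.
have m_coprime3 : ~~ (3 %| m)%N by rewrite /m dvdn_addr ?dvdn_mulr.
have xc : (x ^+ (c * c + c + 1) = 1)%g.
  have c_mod : (c%:Z == t %[mod m])%Z.
    by rewrite /c gez0_abs ?modz_mod // modz_ge0 // eqz_nat /m addn1.
  have := dvdz_sqr_add_add1 ht3 _ c_mod; rewrite /coprimez htg => /(_ isT).
  rewrite expr2 -PoszM -!PoszD => /dvdnP[q /= ->].
  by rewrite mulnC expgM hx expg1n.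
have F3 : 3%:R = 0 :> F := pcharf0 hchar.
have N1 : #|<[x]>%G|%:R = 1 :> F.
  by rewrite (card_cycle_m hx hy hxy) // /m natrD natrM F3 mul0r add0r.
split; first exact/Anh_classfun_ideal/s3_classfun.
apply: (Anh_s3_nilpotent F3 N1 (norm_cycle_setT hxy hgen) hy).
- exact: (notin_cycle_y hx hy hxy hgen hcard).
- exact: (lcosets_cycle_cover hy hxy hgen).
- exact: (p_elt3_cycle hx hy hxy xc hgen hcard).
Qed.
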